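(* Let $C$ be a real $k\times l$ matrix with all entries nonnegative and no column consisting entirely of zeros, and let $A$ be the real symmetric $(k+1+l)\times(k+1+l)$ block matrix $$A=\begin{pmatrix}\mathbf 0_{k\times k}&\mathbf 0_{k\times 1}&C\\ \mathbf 0_{1\times k}&0&\mathbf 0_{1\times l}\\ C^{T}&\mathbf 0_{l\times 1}&\mathbf 0_{l\times l}\end{pmatrix}.$$ If $A$ has symmetric tropical rank two, then $A$ has symmetric Kapranov rank two.
   Context: Let $\tilde K$ be the field of Hahn series $\sum_{\alpha\in A}c_\alpha t^\alpha$ ($A\subset\mathbb R$ well-ordered, $c_\alpha\in\mathbb C$); for nonzero $a\in\tilde K$, $\deg(a)$ is the smallest exponent with nonzero coefficient. A symmetric lift of a real symmetric matrix $A$ is a symmetric matrix $\tilde A$ over $\tilde K$ with all entries nonzero and $\deg(\tilde a_{i,j})=A_{i,j}$; the symmetric Kapranov rank of $A$ is the minimum rank of a symmetric lift. For an $r\times r$ submatrix of $A$ with row index set $I$ and column index set $J$, each bijection $\rho:I\to J$ gives a monomial $\prod_{i\in I}X_{i,\rho(i)}$ in commuting variables subject to $X_{i,j}=X_{j,i}$, with value $\sum_{i\in I}A_{i,\rho(i)}$; the submatrix is symmetrically tropically singular if the minimum value is attained by at least two distinct monomials. The symmetric tropical rank of $A$ is the largest $r$ such that $A$ has an $r\times r$ submatrix that is not symmetrically tropically singular. *)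

From HB Require Import structures.
From mathcomp Require Import all_boot all_order all_algebra.
From mathcomp Require Import boolp classical_sets fsbigop.
From mathcomp Require Import complex Rstruct.
Set Implicit Arguments. Unset Strict Implicit. Unset Printing Implicit Defensive.
Import Order.TTheory GRing.Theory Num.Theory.
Local Open Scope ring_scope.
Local Open Scope classical_set_scope.

Definition RR := Rdefinitions.R.
Definition CC := (Rdefinitions.R)[i].

(* raw coefficient functions; a Hahn series is such a function whose support
   is well-ordered *)
Definition hs := RR -> CC.

Definition hsupport (f : hs) : set RR := [set a | f a != 0].

Definition well_ordered (A : set RR) : Prop :=
  forall B : set RR, B `<=` A -> B !=set0 ->
    exists b, B b /\ forall x, B x -> b <= x.

Definition is_hahn (f : hs) : Prop := well_ordered (hsupport f).

Definition hzero : hs := fun _ => 0.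
Definition hadd (f g : hs) : hs := fun x => f x + g x.
(* Cauchy product: (fg)_c = sum_{a+b=c} f_a g_b; for Hahn series the index
   set below is finite, so the finitely supported sum is the honest sum *)
Definition hmul (f g : hs) : hs := fun c =>
  (\sum_(p \in [set p : RR * RR | (p.1 + p.2 = c) /\ f p.1 != 0 /\ g p.2 != 0])
      (f p.1 * g p.2))%R.

Definition hdeg_is (f : hs) (a : RR) : Prop :=
  f a != 0 /\ forall b, b < a -> f b = 0.

(* rank over the Hahn series field: L (an m x n matrix of Hahn series) has
   rank <= r iff it factors as U V through r columns of Hahn series *)
Definition hs_factors m n (L : 'M[hs]_(m, n)) (r : nat) : Prop :=
  exists (U : 'M[hs]_(m, r)) (V : 'M[hs]_(r, n)),
    (forall i t, is_hahn (U i t)) /\ (forall t j, is_hahn (V t j)) /\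
    forall i j, L i j = \big[hadd/hzero]_(t < r) hmul (U i t) (V t j).

Definition sym_lift n (A : 'M[RR]_n) (L : 'M[hs]_n) : Prop :=
  (forall i j, L i j = L j i) /\
  (forall i j, is_hahn (L i j) /\ hdeg_is (L i j) (A i j)).

Definition sym_kapranov_rank_is n (A : 'M[RR]_n) (r : nat) : Prop :=
  (exists L, sym_lift A L /\ hs_factors L r) /\
  (forall L s, sym_lift A L -> hs_factors L s -> (r <= s)%N).

Definition is_bij n (I J : {set 'I_n}) (rho : 'I_n -> 'I_n) : Prop :=
  {in I &, injective rho} /\ rho @: I = J.

(* the monomial prod_{i in I} X_{i, rho i} with X_{a,b} = X_{b,a}, encoded by
   its exponent of each variable X_{a,b} = X_{b,a} *)
Definition sym_monomial n (I : {set 'I_n}) (rho : 'I_n -> 'I_n) :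
    'I_n -> 'I_n -> nat :=
  fun a b => #|[set i in I | ((i == a) && (rho i == b)) ||
                             ((i == b) && (rho i == a))]|.

Definition trop_value n (A : 'M[RR]_n) (I : {set 'I_n}) (rho : 'I_n -> 'I_n)
  : RR := \sum_(i in I) A i (rho i).

Definition sym_trop_singular n (A : 'M[RR]_n) (I J : {set 'I_n}) : Prop :=
  exists rho1 rho2,
    [/\ is_bij I J rho1, is_bij I J rho2,
        sym_monomial I rho1 <> sym_monomial I rho2,
        trop_value A I rho1 = trop_value A I rho2 &
        forall sigma, is_bij I J sigma ->
          trop_value A I rho1 <= trop_value A I sigma].

Definition sym_trop_rank_is n (A : 'M[RR]_n) (r : nat) : Prop :=
  (exists I J : {set 'I_n},
      [/\ #|I| = r, #|J| = r & ~ sym_trop_singular A I J]) /\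
  (forall (s : nat) (I J : {set 'I_n}),
      #|I| = s -> #|J| = s -> ~ sym_trop_singular A I J -> (s <= r)%N).

Definition blockA k l (C : 'M[RR]_(k, l)) : 'M[RR]_(k + 1 + l) :=
  block_mx (0 : 'M[RR]_(k + 1)) (col_mx C (0 : 'M[RR]_(1, l)))
           (row_mx C^T (0 : 'M[RR]_(l, 1))) (0 : 'M[RR]_l).

(* A symmetric lift of rank one would have additive degrees,
   [A i j = deg (u i) + deg (v j)], forcing [2 A i j = A i i + A j j = 0]; so
   any nonzero matrix with zero diagonal has symmetric Kapranov rank at least 2.
   Conversely, if [C r' c <= x] while [C r c], [C r c'] and [C r' c'] exceed
   [x], the 3 x 3 submatrix on rows [r, r', mid] and columns [c, c', mid] has a
   unique optimal bijection. So tropical rank 2 forces every superlevel set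
   [{(r, c) | x < C r c}] to be closed under completing rectangles: the
   bipartite graph of entries above [x] is a disjoint union of complete
   bipartite graphs. Label its components; the rank-two lift is
   [L i j = z i + z j], where the coefficient of [t^x] in [z i] is the label of
   the component of row [i], or minus the label of the component of column [i].
   Then [z r + z c] cancels exactly below [C r c], and the constant terms
   (positive for rows, negative for columns, [-1/2] for the middle index) keep
   every zero entry of [A] at degree 0. *)

From HB Require Import structures.
From mathcomp Require Import all_boot all_order all_algebra.
From mathcomp Require Import boolp classical_sets fsbigop complex Rstruct.
From mathcomp Require Import lra.
Set Implicit Arguments. Unset Strict Implicit. Unset Printing Implicit Defensive.
Import Order.TTheory GRing.Theory Num.Theory.
Local Open Scope ring_scope.

Lemma hdeg_is_uniq f a b : hdeg_is f a -> hdeg_is f b -> a = b.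
Proof.
move=> [fa0 f_lt_a] [fb0 f_lt_b]; case: (ltgtP a b) => // [/f_lt_b|/f_lt_a].
  by move/eqP: fa0.
by move/eqP: fb0.
Qed.

Lemma hdeg_exists f x : is_hahn f -> f x != 0 -> exists a, hdeg_is f a.
Proof.
move=> hahn_f fx0; have [a [fa0 a_min]] := hahn_f _ (@subset_refl _ _) (ex_intro _ x fx0).
exists a; split => // b b_lt_a; apply: contraTeq b_lt_a => fb0.
by rewrite -leNgt; apply: a_min.
Qed.

Lemma is_hahn_finite (s : seq RR) f : (forall x, f x != 0 -> x \in s) -> is_hahn f.
Proof.
move=> supp_s B sub_B [b Bb].
have idx_lt x : B x -> (index x s < size s)%N.
  by move=> Bx; rewrite index_mem; apply: supp_s; apply: sub_B.
case: (@arg_minP _ _ _ (Ordinal (idx_lt _ Bb)) (fun i => `[< B (nth 0 s i) >])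
  (fun i : 'I_(size s) => nth 0 s i)).
  by rewrite /= nth_index ?asboolE // supp_s //; apply: sub_B.
move=> i /asboolP Bi i_min; exists (nth 0 s i); split => // x Bx.
have := i_min (Ordinal (idx_lt _ Bx)); rewrite /= nth_index ?asboolE; last first.
  by apply: supp_s; apply: sub_B.
by apply.
Qed.

Lemma hmul_eq0 f g c :
  (forall a b, a + b = c -> f a != 0 -> g b = 0) -> hmul f g c = 0.
Proof.
move=> fg0; rewrite /hmul.
suff -> : [set p : RR * RR | p.1 + p.2 = c /\ f p.1 != 0 /\ g p.2 != 0]%classic = set0.
  by rewrite fsbig_set0.
apply/seteqP; split=> // [[a b]] /= [ab_c [fa0]].
by rewrite (fg0 _ _ ab_c fa0) eqxx.
Qed.

Lemma hmul_neq0 f g c : hmul f g c != 0 -> exists a b, f a != 0 /\ g b != 0.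
Proof.
apply: contraNP => no_ab; apply/eqP; apply: hmul_eq0 => a b _ fa0.
by apply/eqP; apply: contra_notT no_ab => gb0; exists a, b.
Qed.

Lemma hmul_single f g a b : f a != 0 -> g b != 0 ->
    (forall x y, x + y = a + b -> f x != 0 -> g y != 0 -> x = a) ->
  hmul f g (a + b) = f a * g b.
Proof.
move=> fa0 gb0 uniq_a; rewrite /hmul.
suff -> : [set p : RR * RR | p.1 + p.2 = a + b /\ f p.1 != 0 /\ g p.2 != 0]%classic
    = [set (a, b)]%classic by rewrite fsbig_set1.
apply/seteqP; split=> [[x y] /= [xy_ab [fx0 gy0]]|_ ->] //=.
have x_a := uniq_a _ _ xy_ab fx0 gy0; rewrite /set1 /= x_a.
by congr pair; move: xy_ab; rewrite x_a => /addrI.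
Qed.

Lemma hmul_hdeg f g a b : hdeg_is f a -> hdeg_is g b -> hdeg_is (hmul f g) (a + b).
Proof.
move=> [fa0 f_lt_a] [gb0 g_lt_b].
have ge_a x : f x != 0 -> a <= x.
  by move=> fx0; rewrite leNgt; apply: contra fx0 => /f_lt_a ->.
have ge_b y : g y != 0 -> b <= y.
  by move=> gy0; rewrite leNgt; apply: contra gy0 => /g_lt_b ->.
split.
  rewrite hmul_single //; first exact: mulf_neq0.
  by move=> x y xy_ab /ge_a a_x /ge_b b_y; lra.
move=> c c_lt_ab; apply: hmul_eq0 => x y xy_c /ge_a a_x.
apply/eqP; apply: contraTT c_lt_ab => /ge_b b_y; by rewrite -leNgt -xy_c lerD.
Qed.

Definition hone : hs := fun x => if x == 0 then 1 else 0.

Lemma hone_neq0 x : (hone x != 0) = (x == 0).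
Proof. by rewrite /hone; case: (x == 0); rewrite ?oner_eq0 ?eqxx. Qed.

Lemma hmulr1 f : hmul f hone = f.
Proof.
apply: funext => c; have [fc0|fc0] := eqVneq (f c) 0.
  rewrite fc0; apply: hmul_eq0 => a b ab_c; apply: contraNeq; rewrite hone_neq0 => /eqP b0.
  by rewrite (_ : a = c) ?fc0 // -ab_c b0 addr0.
rewrite -{1}[c]addr0 hmul_single ?hone_neq0 //; first by rewrite /hone eqxx mulr1.
by move=> x y + _; rewrite hone_neq0 => xy_c /eqP y0; move: xy_c; rewrite y0 => /addIr.
Qed.

Lemma hmul1r f : hmul hone f = f.
Proof.
apply: funext => c; have [fc0|fc0] := eqVneq (f c) 0.
  rewrite fc0; apply: hmul_eq0 => a b ab_c; rewrite hone_neq0 => /eqP a0.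
  by rewrite (_ : b = c) // -ab_c a0 add0r.
rewrite -{1}[c]add0r hmul_single ?hone_neq0 //; first by rewrite /hone eqxx mul1r.
by move=> x y _; rewrite hone_neq0 => /eqP.
Qed.

Lemma is_hahn_hone : is_hahn hone.
Proof. by apply: (@is_hahn_finite [:: 0]) => x; rewrite hone_neq0 inE. Qed.

Definition hreal (f : RR -> RR) : hs := fun x => (f x)%:C%C.

Lemma hreal_neq0 f x : (hreal f x != 0) = (f x != 0).
Proof. by rewrite /hreal fmorph_eq0. Qed.

Lemma hdeg_hreal f a :
  f a != 0 -> (forall b, b < a -> f b = 0) -> hdeg_is (hreal f) a.
Proof. by move=> fa0 f_lt_a; split=> [|b /f_lt_a]; rewrite ?hreal_neq0 // /hreal => ->. Qed.

Lemma sym_lift_sym n (A : 'M[RR]_n) L : sym_lift A L -> forall i j, A i j = A j i.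
Proof.
move=> [L_sym L_deg] i j; have [_ deg_ij] := L_deg i j; have [_ deg_ji] := L_deg j i.
by apply: hdeg_is_uniq deg_ji; rewrite -L_sym.
Qed.

Lemma lift_rank1_degD n (A : 'M[RR]_n) L : sym_lift A L -> hs_factors L 1 ->
  forall i j, A i j + A j i = A i i + A j j.
Proof.
move=> [_ L_deg] [U [V [U_hahn [V_hahn L_UV]]]].
have L_mul i j : L i j = hmul (U i ord0) (V ord0 j).
  by rewrite L_UV big_ord_recl big_ord0; apply: funext => x; rewrite /hadd /hzero addr0.
have [degU degV] : (forall i, exists a, hdeg_is (U i ord0) a) /\
                   (forall j, exists b, hdeg_is (V ord0 j) b).
  split=> i; have [_ [+ _]] := L_deg i i; rewrite L_mul => /hmul_neq0 [a [b [Ua0 Vb0]]].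
    exact: hdeg_exists Ua0.
  exact: hdeg_exists Vb0.
have A_add i j a b : hdeg_is (U i ord0) a -> hdeg_is (V ord0 j) b -> A i j = a + b.
  move=> Ua Vb; have [_] := L_deg i j; rewrite L_mul => deg_ij.
  exact: hdeg_is_uniq deg_ij (hmul_hdeg Ua Vb).
move=> i j; have [ai Uai] := degU i; have [aj Uaj] := degU j.
have [bi Vbi] := degV i; have [bj Vbj] := degV j.
rewrite (A_add _ _ _ _ Uai Vbj) (A_add _ _ _ _ Uaj Vbi).
rewrite (A_add _ _ _ _ Uai Vbi) (A_add _ _ _ _ Uaj Vbj); lra.
Qed.

Lemma sym_kapranov_rank_ge2 n (A : 'M[RR]_n) i j L s :
    (forall i, A i i = 0) -> A i j != 0 -> sym_lift A L -> hs_factors L s ->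
  (2 <= s)%N.
Proof.
move=> A_diag Aij0 L_lift; case: s => [|[|//]] L_fact.
  have [U [V [_ [_ L_0]]]] := L_fact; have [_ [+ _]] := L_lift.2 i i.
  by rewrite L_0 big_ord0 eqxx.
have := lift_rank1_degD L_lift L_fact i j.
rewrite !A_diag (sym_lift_sym L_lift j i) addr0 -mulr2n => /eqP.
by rewrite mulrn_eq0 (negbTE Aij0).
Qed.

Lemma card3 (T : finType) (a b c : T) :
  a != b -> a != c -> b != c -> #|a |: [set b; c]| = 3.
Proof. by move=> ab ac bc; rewrite cardsU1 cards2 !inE negb_or ab ac bc. Qed.

Lemma is_bij_imset n (I J : {set 'I_n}) rho :
  #|I| = #|J| -> rho @: I = J -> is_bij I J rho.
Proof. by move=> card_IJ rhoI; split=> //; apply/imset_injP; rewrite rhoI card_IJ. Qed.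

Lemma sym_monomial_eq_in n (I : {set 'I_n}) rho1 rho2 :
  {in I, rho1 =1 rho2} -> sym_monomial I rho1 = sym_monomial I rho2.
Proof.
move=> rho12; apply: funext => a; apply: funext => b; apply: eq_card => i.
by rewrite !inE; case: (boolP (i \in I)) => //= /rho12 ->.
Qed.

Lemma unique_min_nonsingular n (A : 'M[RR]_n) I J sigma : is_bij I J sigma ->
    (forall tau, is_bij I J tau -> trop_value A I tau <= trop_value A I sigma ->
       {in I, tau =1 sigma}) ->
  ~ sym_trop_singular A I J.
Proof.
move=> sigma_bij sigma_min [rho1 [rho2 [bij1 bij2 mon12 val12 min1]]].
have rho1_sigma := sigma_min _ bij1 (min1 _ sigma_bij).
have := min1 _ sigma_bij; rewrite val12 => /(sigma_min _ bij2) rho2_sigma.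
by apply: mon12; apply: sym_monomial_eq_in => i iI; rewrite rho1_sigma ?rho2_sigma.
Qed.

Lemma const_sym_trop_singular n (a : RR) (I J : {set 'I_n}) :
  #|I| = 2 -> #|J| = 2 -> sym_trop_singular (const_mx a) I J.
Proof.
move=> /eqP/cards2P [i1 [i2 [i12 ->]]] /eqP/cards2P [j1 [j2 [j12 ->]]].
pose rho1 i := if i == i1 then j1 else j2.
pose rho2 i := if i == i1 then j2 else j1.
have i21 : (i2 == i1) = false by rewrite eq_sym (negbTE i12).
have card_IJ : #|[set i1; i2]| = #|[set j1; j2]| by rewrite !cards2 i12 j12.
have value rho : trop_value (const_mx a) [set i1; i2] rho = a *+ 2.
  by rewrite /trop_value (eq_bigr (fun=> a)) => [|i _]; rewrite ?sumr_const ?cards2 ?i12 ?mxE.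
exists rho1, rho2; split.
- by apply: is_bij_imset card_IJ _; rewrite imsetU1 imset_set1 /rho1 eqxx i21.
- by apply: is_bij_imset card_IJ _; rewrite imsetU1 imset_set1 /rho2 eqxx i21 finset.setUC.
- move/(congr1 (fun m => m i1 j1)); rewrite /sym_monomial [RHS]eq_card0 => [|i].
    by apply/eqP; rewrite -lt0n card_gt0; apply/set0Pn; exists i1; rewrite !inE /rho1 !eqxx.
  rewrite !inE /rho2; have [->|_] := eqVneq i i1 => /=.
    rewrite (eq_sym j2) (negbTE j12); case: (eqVneq i1 j1) => [->|//].
    by rewrite (eq_sym j2) (negbTE j12).
  by case: eqP => // ->; case: eqP => //= <-.
- by rewrite !value.
- by move=> sigma _; rewrite !value.
Qed.

Section BlockMatrix.

Variables (k l : nat) (C : 'M[RR]_(k, l)).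

Definition row_idx (r : 'I_k) : 'I_(k + 1 + l) := lshift l (lshift 1 r).
Definition mid_idx : 'I_(k + 1 + l) := lshift l (rshift k (ord0 : 'I_1)).
Definition col_idx (c : 'I_l) : 'I_(k + 1 + l) := rshift (k + 1) c.

Variant block_index_spec : 'I_(k + 1 + l) -> Type :=
  | BlockRow r : block_index_spec (row_idx r)
  | BlockMid : block_index_spec mid_idx
  | BlockCol c : block_index_spec (col_idx c).

Lemma block_indexP i : block_index_spec i.
Proof.
case: (split_ordP i) => [j ->|c ->]; last exact: BlockCol.
case: (split_ordP j) => [r ->|o ->]; first exact: BlockRow.
by rewrite (ord1 o); apply: BlockMid.
Qed.

Lemma row_idx_inj : injective row_idx.
Proof. by move=> r r' /(congr1 val) /= /val_inj. Qed.

Lemma col_idx_inj : injective col_idx.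
Proof. by move=> c c' /(congr1 val) /= /addnI /val_inj. Qed.

Lemma row_idx_neq_mid r : row_idx r != mid_idx.
Proof. by rewrite -val_eqE /= addn0 neq_ltn ltn_ord. Qed.

Lemma mid_idx_neq_col c : mid_idx != col_idx c.
Proof. by rewrite -val_eqE /= addn0 neq_ltn addn1 ltn_addr. Qed.

Lemma blockA_row_col r c : blockA C (row_idx r) (col_idx c) = C r c.
Proof. by rewrite /blockA block_mxEur col_mxEu. Qed.

Lemma blockA_col_row c r : blockA C (col_idx c) (row_idx r) = C r c.
Proof. by rewrite /blockA block_mxEdl row_mxEl mxE. Qed.

Lemma blockA_ul (i j : 'I_(k + 1)) : blockA C (lshift l i) (lshift l j) = 0.
Proof. by rewrite /blockA block_mxEul mxE. Qed.

Lemma blockA_mid_col c : blockA C mid_idx (col_idx c) = 0.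
Proof. by rewrite /blockA block_mxEur col_mxEd mxE. Qed.

Lemma blockA_col_mid c : blockA C (col_idx c) mid_idx = 0.
Proof. by rewrite /blockA block_mxEdl row_mxEr mxE. Qed.

Lemma blockA_col_col c c' : blockA C (col_idx c) (col_idx c') = 0.
Proof. by rewrite /blockA block_mxEdr mxE. Qed.

Lemma blockA_diag i : blockA C i i = 0.
Proof. by case: (block_indexP i) => [r||c]; rewrite ?blockA_ul ?blockA_col_col. Qed.

End BlockMatrix.

Definition superlevel_rect_closed k l (C : 'M[RR]_(k, l)) : Prop :=
  forall x r r' c c', x < C r c' -> x < C r c -> x < C r' c' -> x < C r' c.

Section TropicalRank.

Variables (k l : nat) (C : 'M[RR]_(k, l)).
Hypothesis C_ge0 : forall r c, 0 <= C r c.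

Let A := blockA C.

(* [C r c], [C r c'] and [C r' c'] all exceed [x >= C r' c >= 0], so a bijection
   of value at most [C r' c] must avoid them. *)
Lemma blockA_3x3_optimal r r' c c' x (t1 t2 t3 : 'I_(k + 1 + l)) :
    x < C r c' -> x < C r c -> x < C r' c' -> C r' c <= x ->
    let J := col_idx k c |: [set col_idx k c'; mid_idx k l] in
    t1 \in J -> t2 \in J -> t3 \in J -> t1 != t2 -> t1 != t3 -> t2 != t3 ->
    A (row_idx l r) t1 + (A (row_idx l r') t2 + A (mid_idx k l) t3) <= C r' c ->
  [/\ t1 = mid_idx k l, t2 = col_idx k c & t3 = col_idx k c'].
Proof.
move=> lt_rc' lt_rc lt_r'c' le_r'c J; have := C_ge0 r' c.
rewrite !inE => C0 /or3P [] /eqP -> /or3P [] /eqP -> /or3P [] /eqP ->; rewrite ?eqxx //;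
  rewrite /A ?blockA_row_col ?blockA_ul ?blockA_mid_col => *; lra.
Qed.

Lemma blockA_nonsingular_3x3 r r' c c' x :
    x < C r c' -> x < C r c -> x < C r' c' -> C r' c <= x ->
  exists I J : {set 'I_(k + 1 + l)}, [/\ #|I| = 3, #|J| = 3 & ~ sym_trop_singular A I J].
Proof.
move=> lt_rc' lt_rc lt_r'c' le_r'c.
have r_r' : r != r' by apply: contraTneq lt_rc => ->; rewrite -leNgt.
have c_c' : c != c' by apply: contraTneq lt_r'c' => <-; rewrite -leNgt.
have R12 : row_idx l r != row_idx l r' by rewrite (inj_eq (@row_idx_inj _ _)).
have K12 : col_idx k c != col_idx k c' by rewrite (inj_eq (@col_idx_inj _ _)).
have [R1M R2M] := (row_idx_neq_mid l r, row_idx_neq_mid l r').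
have K1M : col_idx k c != mid_idx k l by rewrite eq_sym mid_idx_neq_col.
have K2M : col_idx k c' != mid_idx k l by rewrite eq_sym mid_idx_neq_col.
set I := row_idx l r |: [set row_idx l r'; mid_idx k l].
set J := col_idx k c |: [set col_idx k c'; mid_idx k l].
have [card_I card_J] : #|I| = 3 /\ #|J| = 3 by rewrite !card3.
exists I, J; split=> //.
have card_IJ : #|I| = #|J| by rewrite card_I card_J.
have value tau : trop_value A I tau =
    A (row_idx l r) (tau (row_idx l r)) + (A (row_idx l r') (tau (row_idx l r')) +
    A (mid_idx k l) (tau (mid_idx k l))).
  by rewrite /trop_value /I !big_setU1 ?big_set1 // !inE ?negb_or ?R12 ?R1M ?R2M.
pose sigma i := if i == row_idx l r then mid_idx k l
                else if i == row_idx l r' then col_idx k c else col_idx k c'.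
have R1I : row_idx l r \in I by rewrite !inE eqxx.
have R2I : row_idx l r' \in I by rewrite !inE eqxx orbT.
have MI : mid_idx k l \in I by rewrite !inE eqxx !orbT.
apply: (@unique_min_nonsingular _ _ _ _ sigma).
  apply: is_bij_imset card_IJ _; rewrite !imsetU1 imset_set1 /sigma !eqxx !ifN_eqC //.
  by apply/setP => i; rewrite !inE; case: (_ == mid_idx _ _); rewrite ?orbT ?orbF.
have value_sigma : trop_value A I sigma = C r' c.
  rewrite value /sigma !eqxx !ifN_eqC // /A blockA_ul blockA_row_col blockA_mid_col.
  by rewrite add0r addr0.
move=> tau [tau_inj tauI]; rewrite value_sigma value => le_sigma.
have tauJ i : i \in I -> tau i \in J by move=> iI; rewrite -tauI imset_f.
have tau_neq i j : i \in I -> j \in I -> i != j -> tau i != tau j.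
  by move=> iI jI; apply: contraNneq => /tau_inj ->.
have [t1 t2 tM] := blockA_3x3_optimal lt_rc' lt_rc lt_r'c' le_r'c (tauJ _ R1I) (tauJ _ R2I)
  (tauJ _ MI) (tau_neq _ _ R1I R2I R12) (tau_neq _ _ R1I MI R1M) (tau_neq _ _ R2I MI R2M)
  le_sigma.
by move=> i; rewrite !inE => /or3P [] /eqP ->; rewrite /sigma ?eqxx ?ifN_eqC.
Qed.

Lemma superlevel_rect_closed_of_trop_rank :
    (forall s (I J : {set 'I_(k + 1 + l)}),
       #|I| = s -> #|J| = s -> ~ sym_trop_singular A I J -> (s <= 2)%N) ->
  superlevel_rect_closed C.
Proof.
move=> rank_le2 x r r' c c' lt_rc' lt_rc lt_r'c'; rewrite ltNge; apply/negP => le_r'c.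
have [I [J [card_I card_J]]] := blockA_nonsingular_3x3 lt_rc' lt_rc lt_r'c' le_r'c.
by move/(rank_le2 _ _ _ card_I card_J).
Qed.

End TropicalRank.

Section SymmetricLift.

Variables (k l : nat) (C : 'M[RR]_(k, l)).
Hypothesis C_ge0 : forall r c, 0 <= C r c.
Hypothesis C_rect : superlevel_rect_closed C.

(* The rows in the component of row [r], resp. column [c], of the bipartite
   graph of entries above [x]. *)
Definition row_block (r : 'I_k) (x : RR) : {set 'I_k} :=
  [set r' | (r' == r) || [exists c, (x < C r c) && (x < C r' c)]].

Definition col_block (c : 'I_l) (x : RR) : {set 'I_k} := [set r' | x < C r' c].

Lemma row_block_col_block r c x : x < C r c -> row_block r x = col_block c x.
Proof.
move=> lt_rc; apply/setP => r'; rewrite !inE; apply/idP/idP.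
  case/orP=> [/eqP -> //|/existsP [c' /andP [lt_rc' lt_r'c']]].
  exact: C_rect lt_rc' lt_rc lt_r'c'.
by move=> lt_r'c; apply/orP; right; apply/existsP; exists c; rewrite lt_rc.
Qed.

Lemma row_block_neq_col_block r c : row_block r (C r c) != col_block c (C r c).
Proof. by apply/negP => /eqP /setP /(_ r); rewrite !inE eqxx ltxx. Qed.

Definition label (S : {set 'I_k}) : RR := (enum_rank S).+1%:R.

Lemma label_ge1 S : 1 <= label S.
Proof. by rewrite /label ler1n. Qed.

Lemma label_inj : injective label.
Proof. by move=> S S' /eqP; rewrite eqr_nat eqSS => /eqP /val_inj /enum_rank_inj. Qed.

Definition exponents : seq RR := 0 :: [seq C rc.1 rc.2 | rc : 'I_k * 'I_l].

Lemma exponents_ge0 x : x \in exponents -> 0 <= x.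
Proof. by rewrite in_cons => /orP [/eqP -> //|/mapP [[r c] _ ->]]; apply: C_ge0. Qed.

Lemma C_in_exponents r c : C r c \in exponents.
Proof. by rewrite in_cons; apply/orP; right; apply/mapP; exists (r, c); rewrite ?mem_enum. Qed.

Definition zrow r x := if x \in exponents then label (row_block r x) else 0.
Definition zcol c x := if x \in exponents then - label (col_block c x) else 0.
Definition zmid (x : RR) : RR := if x == 0 then - 2^-1 else 0.

Definition z (i : 'I_(k + 1 + l)) : RR -> RR :=
  match split i with
  | inl j => if split j is inl r then zrow r else zmid
  | inr c => zcol c
  end.

Lemma z_row r : z (row_idx l r) = zrow r.
Proof. by rewrite /z /row_idx !(unsplitK (inl _)). Qed.

Lemma z_mid : z (mid_idx k l) = zmid.
Proof. by rewrite /z /mid_idx (unsplitK (inl _)) (unsplitK (inr _)). Qed.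

Lemma z_col c : z (col_idx k c) = zcol c.
Proof. by rewrite /z /col_idx (unsplitK (inr _)). Qed.

Lemma z_supp i x : z i x != 0 -> x \in exponents.
Proof.
case: (block_indexP i) => [r||c]; rewrite ?z_row ?z_mid ?z_col /zrow /zmid /zcol.
- by case: ifP; rewrite ?eqxx.
- by case: (eqVneq x 0) => [-> _|_]; rewrite ?in_cons ?eqxx.
- by case: ifP; rewrite ?eqxx.
Qed.

Lemma z_lt0 i x : x < 0 -> z i x = 0.
Proof.
by move=> x_lt0; apply/eqP; apply: contraTT x_lt0 => /z_supp /exponents_ge0; rewrite -leNgt.
Qed.

Lemma z0_row r : 1 <= z (row_idx l r) 0.
Proof. by rewrite z_row /zrow inE eqxx label_ge1. Qed.

Lemma z0_mid : z (mid_idx k l) 0 = - 2^-1.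
Proof. by rewrite z_mid /zmid eqxx. Qed.

Lemma z0_col c : z (col_idx k c) 0 <= -1.
Proof. by rewrite z_col /zcol inE eqxx lerN2 label_ge1. Qed.

Definition lift : 'M[hs]_(k + 1 + l) := \matrix_(i, j) hreal (fun x => z i x + z j x).

Lemma lift_sym i j : lift i j = lift j i.
Proof. by rewrite !mxE; apply: funext => x; rewrite /hreal addrC. Qed.

Lemma is_hahn_hreal_z i : is_hahn (hreal (z i)).
Proof. by apply: (@is_hahn_finite exponents) => x; rewrite hreal_neq0 => /z_supp. Qed.

Lemma is_hahn_lift i j : is_hahn (lift i j).
Proof.
apply: (@is_hahn_finite exponents) => x; rewrite mxE hreal_neq0.
by apply: contraR => x_nexp; rewrite !(contraNeq (@z_supp _ x)) ?addr0.
Qed.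

Lemma hdeg_lift0 i j : z i 0 + z j 0 != 0 -> hdeg_is (lift i j) 0.
Proof. by move=> z0; rewrite mxE; apply: hdeg_hreal => // b b_lt0; rewrite !z_lt0 ?addr0. Qed.

Lemma hdeg_lift_row_col r c : hdeg_is (lift (row_idx l r) (col_idx k c)) (C r c).
Proof.
rewrite mxE z_row z_col /zrow /zcol; apply: hdeg_hreal => [|x lt_rc].
  rewrite C_in_exponents subr_eq0.
  by apply: contra (row_block_neq_col_block r c) => /eqP /label_inj ->.
by rewrite (row_block_col_block lt_rc); case: (_ \in _); rewrite ?subrr ?addr0.
Qed.

Lemma hdeg_lift i j : hdeg_is (lift i j) (blockA C i j).
Proof.
case: (block_indexP i) => [r||c]; case: (block_indexP j) => [r'||c'];
  rewrite ?blockA_row_col ?blockA_col_row ?blockA_ul ?blockA_mid_col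
          ?blockA_col_mid ?blockA_col_col.
- by apply/hdeg_lift0/lt0r_neq0; have := z0_row r; have := z0_row r'; lra.
- by apply/hdeg_lift0/lt0r_neq0; rewrite z0_mid; have := z0_row r; lra.
- exact: hdeg_lift_row_col.
- by apply/hdeg_lift0/lt0r_neq0; rewrite z0_mid; have := z0_row r'; lra.
- by apply/hdeg_lift0/ltr0_neq0; rewrite z0_mid; lra.
- by apply/hdeg_lift0/ltr0_neq0; rewrite z0_mid; have := z0_col c'; lra.
- by rewrite lift_sym; apply: hdeg_lift_row_col.
- by apply/hdeg_lift0/ltr0_neq0; rewrite z0_mid; have := z0_col c; lra.
- by apply/hdeg_lift0/ltr0_neq0; have := z0_col c; have := z0_col c'; lra.
Qed.

Lemma sym_lift_lift : sym_lift (blockA C) lift.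
Proof.
by split=> [|i j]; [apply: lift_sym | split; [apply: is_hahn_lift | apply: hdeg_lift]].
Qed.

Lemma lift_factors2 : hs_factors lift 2.
Proof.
exists (\matrix_(i < k + 1 + l, t < 2) if t == 0 then hreal (z i) else hone).
exists (\matrix_(t < 2, j < k + 1 + l) if t == 0 then hone else hreal (z j)).
split; [|split].
- by move=> i t; rewrite mxE; case: ifP => _; [apply: is_hahn_hreal_z | apply: is_hahn_hone].
- by move=> t j; rewrite mxE; case: ifP => _; [apply: is_hahn_hone | apply: is_hahn_hreal_z].
move=> i j; rewrite !big_ord_recl big_ord0 !mxE /= hmulr1 hmul1r.
by apply: funext => x; rewrite /hadd /hzero /hreal addr0 rmorphD.
Qed.

End SymmetricLift.

Unset Implicit Arguments.

Theorem lemma1 (k l : nat) (C : 'M[RR]_(k, l))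
  (C_nonneg : forall i j, 0 <= C i j)
  (C_nozerocol : forall j, exists i, C i j != 0) :
  sym_trop_rank_is (blockA C) 2 -> sym_kapranov_rank_is (blockA C) 2.
Proof.
move=> [[I [J [card_I card_J nonsing]]] rank_le2].
have [i [j Aij0]] : exists i j, blockA C i j != 0.
  apply: contra_notP nonsing => A0.
  suff -> : blockA C = const_mx 0 by apply: const_sym_trop_singular.
  apply/matrixP => i j; rewrite [RHS]mxE; apply/eqP; apply: contra_notT A0 => Aij0.
  by exists i, j.
have C_rect := superlevel_rect_closed_of_trop_rank C_nonneg rank_le2.
split; first by exists (lift C); split; [apply: sym_lift_lift | apply: lift_factors2].
by move=> L s; apply: sym_kapranov_rank_ge2 (blockA_diag C) Aij0.
Qed.
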